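(* Let $\mathbf b=\sum_{j=1}^mv_j\mathbf a_j\in\mathcal B$ ($v_j\in[0,1)$) and $u\in M$ with $u-\mathbf b\in\mathbb ZA_+$. Let $\sigma_{\mathbf b}$ be the smallest closed face of $C(A)$ containing $\mathbf b$, and suppose $\sigma_{\mathbf b}\neq C(A)$. Then $G^{(\mathbf b)}_u(\lambda)$ is a nonzero constant if and only if $u=\mathbf b+\sum_{\{j:\mathbf a_j\in\sigma_{\mathbf b}\}}t_j\mathbf a_j$ for (unique) $t_j\in\mathbb Z_{\ge0}$, in which case \[G^{(\mathbf b)}_u(\lambda)=\Big(\prod_{\{j:\mathbf a_j\in\sigma_{\mathbf b}\}}\ell_j^{-t_j}\Big)\Big(\prod_{\{j:\mathbf a_j\in\sigma_{\mathbf b}\}}[-v_j]_{-t_j}\Big).\] If $u$ is not of this form, then $G^{(\mathbf b)}_u(\lambda)=0$.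
   Context: Let $A=\{\mathbf a_1,\dots,\mathbf a_m\}\subseteq\mathbb Z^n$ be linearly independent over $\mathbb R$, $\mathbf a_0\in\mathbb Z^n$, and $\ell_0,\dots,\ell_m$ positive integers with gcd $1$, $\ell_0\mathbf a_0=\sum_{j=1}^m\ell_j\mathbf a_j$, $\ell_0=\sum_{j=1}^m\ell_j$. Let $\mathbb ZA_+$ be the group generated by $A\cup\{\mathbf a_0\}$. Let $V$ be the real span of $A$, $V_{\mathbb Z}=V\cap\mathbb Z^n$, $C(A)$ the closed real cone generated by $A$, $M=V_{\mathbb Z}\cap C(A)$, $P(A)=\{\sum_jc_j\mathbf a_j:0\le c_j<1\}$, $\mathcal B=V_{\mathbb Z}\cap P(A)$. For $z\in\mathbb C$, $l\in\mathbb Z$: $[z]_0=1$, $[z]_l=1/((z+1)\cdots(z+l))$ for $l>0$, $[z]_l=z(z-1)\cdots(z+l+1)$ for $l<0$. For $\mathbf b=\sum_jv_j\mathbf a_j\in\mathcal B$ and $w\in M$, let $g^{(\mathbf b)}_w=\prod_j[-v_j]_{s_j}\ell_j^{s_j}$ if $w=\sum_j(v_j-s_j)\mathbf a_j$ with all $s_j\in\mathbb Z_{\le0}$, and $0$ otherwise; and $G^{(\mathbf b)}_u(\lambda)=\sum_{s\ge0}g^{(\mathbf b)}_{u+s\mathbf a_0}\frac{(-\ell_0\lambda)^s}{s!}\in\mathbb C[[\lambda]]$. *)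

From HB Require Import structures.
From mathcomp Require Import all_boot all_order all_algebra.
From mathcomp Require Import boolp classical_sets reals.
Set Implicit Arguments. Unset Strict Implicit. Unset Printing Implicit Defensive.
Import Order.TTheory GRing.Theory Num.Theory.
Local Open Scope ring_scope.
Local Open Scope classical_set_scope.

Section Defs.
Variables (R : realType) (n m : nat).

Definition toR (x : 'rV[int]_n) : 'rV[R]_n := map_mx (fun z : int => z%:~R) x.

Definition dotR (x y : 'rV[R]_n) : R := \sum_(i < n) x 0 i * y 0 i.

Definition lin_indep (a : 'I_m -> 'rV[int]_n) : Prop :=
  forall c : 'I_m -> R, \sum_(j < m) c j *: toR (a j) = 0 -> forall j, c j = 0.

Definition spanA (a : 'I_m -> 'rV[int]_n) : set 'rV[R]_n :=
  [set x | exists c : 'I_m -> R, x = \sum_(j < m) c j *: toR (a j)].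

(* C(A) = real cone generated by A (a finitely generated cone, hence closed) *)
Definition coneA (a : 'I_m -> 'rV[int]_n) : set 'rV[R]_n :=
  [set x | exists c : 'I_m -> R, (forall j, 0 <= c j) /\
             x = \sum_(j < m) c j *: toR (a j)].

Definition VZ (a : 'I_m -> 'rV[int]_n) : set 'rV[int]_n :=
  [set x | spanA a (toR x)].

Definition MA (a : 'I_m -> 'rV[int]_n) : set 'rV[int]_n :=
  [set x | VZ a x /\ coneA a (toR x)].

Definition ZAplus (a0 : 'rV[int]_n) (a : 'I_m -> 'rV[int]_n) : set 'rV[int]_n :=
  [set x | exists (k0 : int) (k : 'I_m -> int),
             x = k0 *: a0 + \sum_(j < m) k j *: a j].

Definition is_face (C F : set 'rV[R]_n) : Prop :=
  exists phi : 'rV[R]_n, (forall x, C x -> 0 <= dotR phi x) /\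
    F = [set x | C x /\ dotR phi x = 0].

Definition smallest_face (C : set 'rV[R]_n) (b : 'rV[R]_n) : set 'rV[R]_n :=
  [set x | forall F, is_face C F -> F b -> F x].

Definition bracket (z : R) (l : int) : R :=
  match l with
  | Posz k => (\prod_(i < k) (z + i.+1%:R))^-1
  | Negz k => \prod_(i < k.+1) (z - i%:R)
  end.

(* g^{(b)}_w, where b = sum_j v_j a_j *)
Definition gb (a : 'I_m -> 'rV[int]_n) (l : 'I_m -> nat) (v : 'I_m -> R)
    (w : 'rV[int]_n) : R :=
  match pselect (exists s : 'I_m -> int, (forall j, s j <= 0) /\
             toR w = \sum_(j < m) (v j - (s j)%:~R) *: toR (a j)) with
  | left H => let s := projT1 (cid H) in
              \prod_(j < m) (bracket (- v j) (s j) * (l j)%:R ^ (s j))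
  | right _ => 0
  end.

(* coefficient of lambda^s in G^{(b)}_u(lambda) =
   sum_{s>=0} g^{(b)}_{u + s a_0} (-l_0 lambda)^s / s! *)
Definition Gcoef (a0 : 'rV[int]_n) (a : 'I_m -> 'rV[int]_n) (l0 : nat)
    (l : 'I_m -> nat) (v : 'I_m -> R) (u : 'rV[int]_n) (s : nat) : R :=
  gb a l v (u + a0 *+ s) * (- (l0%:R)) ^+ s / (s`!)%:R.

End Defs.

From mathcomp Require Import all_boot all_order all_algebra.
From mathcomp Require Import boolp classical_sets reals.
Import Order.TTheory GRing.Theory Num.Theory.
Local Open Scope ring_scope.
Local Open Scope classical_set_scope.
Set Implicit Arguments. Unset Strict Implicit. Unset Printing Implicit Defensive.

(* By linear independence, g^(b)_w <> 0 forces
   w = sum_j (v_j + t_j) a_j with t_j in N, and t_j = 0 wherever v_j = 0 because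
   [0]_(-t) = 0 for t > 0; conversely every such w has the nonzero value
   prod_j l_j^(-t_j) [-v_j]_(-t_j). A dual functional to the a_j shows that
   a_j lies in sigma_b exactly when v_j > 0, so sigma_b <> C(A) gives some
   v_j0 = 0. For s > 0 the a_j0-coordinate of u + s a_0 is at least
   s l_j0 / l_0 > 0 since u lies in C(A); hence all higher coefficients of
   G^(b)_u vanish and G^(b)_u = g^(b)_u. *)

Section IntegerVectors.
Variables (R : realType) (n : nat).

Lemma toRD : {morph @toR R n : x y / x + y}.
Proof. exact: map_mxD. Qed.

Lemma toRMn (x : 'rV[int]_n) k : toR R (x *+ k) = toR R x *+ k.
Proof. exact: raddfMn. Qed.

Lemma toR_sum I (r : seq I) (P : pred I) (F : I -> 'rV[int]_n) :
  toR R (\sum_(i <- r | P i) F i) = \sum_(i <- r | P i) toR R (F i).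
Proof. exact: map_mx_sum. Qed.

Lemma toRZ (k : int) (x : 'rV[int]_n) : toR R (k *: x) = k%:~R *: toR R x.
Proof. exact: map_mxZ. Qed.

Lemma toR_inj : injective (@toR R n).
Proof.
by move=> x y /matrixP xy; apply/matrixP => i j; have := xy i j; rewrite !mxE => /intr_inj.
Qed.

Lemma dotR_sum m (p : 'rV[R]_n) (c : 'I_m -> R) (F : 'I_m -> 'rV[R]_n) :
  dotR p (\sum_(j < m) c j *: F j) = \sum_(j < m) c j * dotR p (F j).
Proof.
rewrite /dotR; under eq_bigr do rewrite summxE mulr_sumr.
rewrite exchange_big; apply: eq_bigr => j _; rewrite mulr_sumr.
by apply: eq_bigr => i _; rewrite mxE mulrCA.
Qed.

End IntegerVectors.

Section ConeFaces.
Variables (R : realType) (n m : nat) (a : 'I_m -> 'rV[int]_n).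
Hypothesis a_indep : lin_indep R a.

Lemma coneA_gen j : coneA a (toR R (a j)).
Proof.
exists (fun k => (k == j)%:R); split=> [k|]; first by case: (k == j).
by rewrite (bigD1 j) //= eqxx scale1r big1 ?addr0 // => k /negbTE ->; rewrite scale0r.
Qed.

Lemma lin_indep_coord_inj (c d : 'I_m -> R) :
  \sum_(j < m) c j *: toR R (a j) = \sum_(j < m) d j *: toR R (a j) -> c =1 d.
Proof.
move=> cd j; apply/eqP; rewrite -subr_eq0; apply/eqP; apply: (a_indep (c := c \- d)).
by rewrite (eq_bigr _ (fun k _ => scalerBl _ _ _)) sumrB cd subrr.
Qed.

Lemma lin_indep_dual j0 :
  exists phi : 'rV[R]_n, forall k, dotR phi (toR R (a k)) = (k == j0)%:R.
Proof.
pose A := \matrix_(k < m, i < n) toR R (a k) 0 i.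
have rowA k : row k A = toR R (a k) by apply/matrixP => i j; rewrite !mxE ord1.
have /row_freeP[B AB] : row_free A.
  rewrite -kermx_eq0; apply/eqP/matrixP => r k; rewrite [RHS]mxE.
  have kerA : row r (kermx A) *m A = 0 by rewrite -row_mul mulmx_ker row0.
  have := a_indep (c := fun k => row r (kermx A) 0 k).
  rewrite -(eq_bigr _ (fun k _ => congr1 _ (rowA k))) -mulmx_sum_row.
  by move/(_ kerA k); rewrite mxE.
exists (\row_i B i j0) => k; rewrite /dotR -rowA.
have := congr1 (fun M : 'M[R]_m => M k j0) AB; rewrite !mxE => <-.
by apply: eq_bigr => i _; rewrite !mxE mulrC.
Qed.

Variables (v : 'I_m -> R) (b : 'rV[R]_n).
Hypotheses (v_ge0 : forall j, 0 <= v j) (bE : b = \sum_(j < m) v j *: toR R (a j)).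

Lemma supporting_dotR_gen_eq0 (phi : 'rV[R]_n) j :
  (forall x, coneA a x -> 0 <= dotR phi x) -> dotR phi b = 0 ->
  0 < v j -> dotR phi (toR R (a j)) = 0.
Proof.
move=> phi_ge0 phib0 vj_gt0.
have terms_ge0 k : predT k -> 0 <= v k * dotR phi (toR R (a k)).
  by move=> _; apply: mulr_ge0; [exact: v_ge0 | apply/phi_ge0/coneA_gen].
have sum0 : \sum_(k < m | predT k) v k * dotR phi (toR R (a k)) = 0.
  by rewrite -dotR_sum -bE.
have /eqP := psumr_eq0P terms_ge0 sum0 (i := j) isT.
by rewrite mulf_eq0 gt_eqF // => /eqP.
Qed.

Lemma mem_smallest_face_gen j :
  (toR R (a j) \in smallest_face (coneA a) b) = (0 < v j).
Proof.
apply/idP/idP => [/set_mem sigma_aj | vj_gt0]; last first.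
  apply/mem_set => F [phi [phi_ge0 ->]] [_ phib0].
  by split; [exact: coneA_gen | exact: supporting_dotR_gen_eq0].
rewrite lt_def v_ge0 andbT; apply/negP => /eqP vj0.
have [phi phiE] := lin_indep_dual j.
have dot_coord c : dotR phi (\sum_(k < m) c k *: toR R (a k)) = c j.
  rewrite dotR_sum (bigD1 j) //= phiE eqxx mulr1 big1 ?addr0 // => k /negbTE kj.
  by rewrite phiE kj mulr0.
have [||_] := sigma_aj [set x | coneA a x /\ dotR phi x = 0].
- by exists phi; split=> // x [c [c_ge0 ->]]; rewrite dot_coord.
- by split; [exists v; split | rewrite bE dot_coord].
- by rewrite phiE eqxx => /eqP; rewrite oner_eq0.
Qed.

(* If all v_j > 0, every face through b contains every a_j, and phi = 0 exhibits
   C(A) itself as a face. *)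
Lemma smallest_face_neq_cone :
  smallest_face (coneA a) b <> coneA a -> exists j, v j = 0.
Proof.
apply: contra_notP => v_neq0; apply/seteqP; split=> x.
  have dot0 y : dotR 0 y = 0 by rewrite /dotR big1 // => i _; rewrite mxE mul0r.
  case/(_ [set x | coneA a x /\ dotR 0 x = 0]) => //.
  - by exists 0; split=> // y _; rewrite dot0.
  - by split; [exists v; split | rewrite dot0].
move=> [c [c_ge0 ->]] F [phi [phi_ge0 ->]] [_ phib0]; split; first by exists c.
rewrite dotR_sum big1 // => k _; rewrite supporting_dotR_gen_eq0 ?mulr0 //.
by rewrite lt_def v_ge0 andbT; apply/eqP => vk0; apply: v_neq0; exists k.
Qed.

End ConeFaces.

Section Bracket.
Variable R : realType.

Lemma bracket0 (z : R) : bracket z 0 = 1.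
Proof. by rewrite -[0]/(Posz 0) /bracket big_ord0 invr1. Qed.

Lemma bracket0_neg (s : int) : s < 0 -> bracket (0 : R) s = 0.
Proof. by case: s => // k _; rewrite /bracket big_ord_recl /= subrr mul0r. Qed.

Lemma bracket_neq0 (z : R) (s : int) : z < 0 -> s <= 0 -> bracket z s != 0.
Proof.
move=> z_lt0; case: s => [k|k] /=.
  by rewrite lez_nat leqn0 => /eqP ->; rewrite /bracket big_ord0 invr1 oner_neq0.
move=> _; rewrite /bracket; apply/prodf_neq0 => i _.
by rewrite lt_eqF // subr_lt0 (lt_le_trans z_lt0).
Qed.

End Bracket.

Section Gb.
Variables (R : realType) (n m : nat) (a : 'I_m -> 'rV[int]_n).
Variables (l : 'I_m -> nat) (v : 'I_m -> R).
Hypothesis a_indep : lin_indep R a.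

Lemma gbE (w : 'rV[int]_n) (s : 'I_m -> int) : (forall j, s j <= 0) ->
  toR R w = \sum_(j < m) (v j - (s j)%:~R) *: toR R (a j) ->
  gb a l v w = \prod_(j < m) (bracket (- v j) (s j) * (l j)%:R ^ (s j)).
Proof.
move=> s_le0 wE; rewrite /gb; case: pselect => [ex_s|[]]; last by exists s.
case: (cid ex_s) => s' [_ wE'] /=; apply: eq_bigr => j _.
have /(congr1 (fun x => v j - x)) := lin_indep_coord_inj a_indep (etrans (esym wE') wE) j.
by rewrite !subKr => /intr_inj ->.
Qed.

Lemma gb_shiftE (w : 'rV[int]_n) (t : 'I_m -> nat) :
  toR R w = \sum_(j < m) (v j + (t j)%:R) *: toR R (a j) ->
  gb a l v w = \prod_(j < m) (bracket (- v j) (- (t j)%:Z) * (l j)%:R ^ (- (t j)%:Z)).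
Proof.
move=> wE; apply: gbE => [j|]; first by rewrite oppr_le0.
by rewrite wE; apply: eq_bigr => j _; rewrite intrN opprK.
Qed.

Lemma gb_neq0_shift (w : 'rV[int]_n) : gb a l v w != 0 ->
  exists t : 'I_m -> nat, (forall j, v j = 0 -> t j = 0%N) /\
    toR R w = \sum_(j < m) (v j + (t j)%:R) *: toR R (a j).
Proof.
rewrite /gb; case: pselect => [ex_s|]; last by rewrite eqxx.
case: (cid ex_s) => s [s_le0 wE] /= gb_neq0; exists (fun j => `|s j|%N); split.
  move=> j vj0; apply/eqP; rewrite absz_eq0; apply: contraNT gb_neq0 => sj_neq0.
  by rewrite (bigD1 j) //= vj0 oppr0 bracket0_neg ?mul0r // lt_neqAle sj_neq0 s_le0.
by rewrite wE; apply: eq_bigr => j _; rewrite natr_absz ler0_norm ?s_le0 // intrN.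
Qed.

Lemma shift_prod_neq0 (t : 'I_m -> nat) :
  (forall j, 0 <= v j) -> (forall j, 0 < l j)%N -> (forall j, v j = 0 -> t j = 0%N) ->
  \prod_(j < m) (bracket (- v j) (- (t j)%:Z) * (l j)%:R ^ (- (t j)%:Z)) != 0.
Proof.
move=> v_ge0 l_gt0 tE; apply/prodf_neq0 => j _.
rewrite mulf_neq0 ?expfz_neq0 ?pnatr_eq0 -?lt0n //.
have [vj_gt0|] := ltP 0 (v j); first by rewrite bracket_neq0 ?oppr_lt0 ?oppr_le0.
by move=> vj_le0; rewrite tE ?bracket0 ?oner_eq0 //; apply/eqP; rewrite eq_le vj_le0 v_ge0.
Qed.

End Gb.

Lemma gb_cone_shift_eq0 (R : realType) n m (a : 'I_m -> 'rV[int]_n) (l : 'I_m -> nat)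
    (v : 'I_m -> R) (a0 u : 'rV[int]_n) (l0 s : nat) j0 :
  lin_indep R a -> (0 < l0)%N -> (forall j, 0 < l j)%N ->
  l0%:Z *: a0 = \sum_(j < m) (l j)%:Z *: a j ->
  coneA a (toR R u) -> v j0 = 0 -> (0 < s)%N -> gb a l v (u + a0 *+ s) = 0.
Proof.
move=> a_indep l0_gt0 l_gt0 a0E [c [c_ge0 uE]] vj0 s_gt0.
apply/eqP/negP => /negP/gb_neq0_shift[t [t_supp wE]].
have a0E' : l0%:R *: toR R a0 = \sum_(j < m) (l j)%:R *: toR R (a j).
  rewrite -[l0%:R]/(l0%:~R : R) -toRZ a0E toR_sum.
  by apply: eq_bigr => j _; rewrite toRZ.
have : \sum_(j < m) (l0%:R * c j + (l j)%:R *+ s) *: toR R (a j) =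
       \sum_(j < m) (l0%:R * (v j + (t j)%:R)) *: toR R (a j).
  transitivity (l0%:R *: toR R (u + a0 *+ s)); last first.
    by rewrite wE scaler_sumr; apply: eq_bigr => j _; rewrite scalerA.
  rewrite toRD toRMn scalerDr -scalerMnr a0E' uE scaler_sumr -sumrMnl -big_split.
  by apply: eq_bigr => j _; rewrite scalerDl scalerA scalerMnl.
move/(lin_indep_coord_inj a_indep)/(_ j0)/eqP; rewrite vj0 t_supp // add0r mulr0.
by rewrite gt_eqF // ltr_wpDl ?mulr_ge0 // mulrn_wgt0 // ltr0n.
Qed.

Lemma Gcoef0E (R : realType) n m (a0 : 'rV[int]_n) (a : 'I_m -> 'rV[int]_n) l0 l
    (v : 'I_m -> R) u :
  Gcoef a0 a l0 l v u 0 = gb a l v u.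
Proof. by rewrite /Gcoef mulr0n addr0 expr0 fact0 mulr1 divr1. Qed.

Section Restriction.
Variables (R : realType) (n m : nat) (a : 'I_m -> 'rV[int]_n).
Variables (l : 'I_m -> nat) (v : 'I_m -> R) (P : pred 'I_m) (t : 'I_m -> nat).

Definition restrict j : nat := if P j then t j else 0%N.

Lemma toR_add_restricted_sum (b : 'rV[int]_n) :
  toR R b = \sum_(j < m) v j *: toR R (a j) ->
  toR R (b + \sum_(j < m | P j) (t j)%:Z *: a j) =
  \sum_(j < m) (v j + (restrict j)%:R) *: toR R (a j).
Proof.
move=> bE; rewrite toRD toR_sum bE [X in _ + X]big_mkcond -big_split.
apply: eq_bigr => j _ /=.
by rewrite /restrict; case: (P j); rewrite ?toRZ scalerDl // scale0r addr0.
Qed.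

Lemma restricted_shift_prod :
  \prod_(j < m) (bracket (- v j) (- (restrict j)%:Z) * (l j)%:R ^ (- (restrict j)%:Z)) =
  (\prod_(j < m | P j) (l j)%:R ^ (- (t j)%:Z)) *
  (\prod_(j < m | P j) bracket (- v j) (- (t j)%:Z)).
Proof.
rewrite (bigID P) /= [X in _ * X]big1 => [|j /negbTE Pj]; last first.
  by rewrite /restrict Pj bracket0 expr0z mulr1.
by rewrite mulr1 -big_split; apply: eq_bigr => j Pj; rewrite /restrict Pj mulrC.
Qed.

End Restriction.

Section SupportShifts.
Variables (R : realType) (n m : nat) (a : 'I_m -> 'rV[int]_n).
Variables (l : 'I_m -> nat) (v : 'I_m -> R) (b : 'rV[int]_n).
Hypotheses (a_indep : lin_indep R a) (bE : toR R b = \sum_(j < m) v j *: toR R (a j)).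

Lemma gb_add_support_sum (t : 'I_m -> nat) :
  gb a l v (b + \sum_(j < m | 0 < v j) (t j)%:Z *: a j) =
  (\prod_(j < m | 0 < v j) (l j)%:R ^ (- (t j)%:Z)) *
  (\prod_(j < m | 0 < v j) bracket (- v j) (- (t j)%:Z)).
Proof.
by rewrite (gb_shiftE l a_indep (toR_add_restricted_sum _ _ bE)) restricted_shift_prod.
Qed.

Lemma gb_add_support_sum_neq0 (t : 'I_m -> nat) :
  (forall j, 0 <= v j) -> (forall j, 0 < l j)%N ->
  gb a l v (b + \sum_(j < m | 0 < v j) (t j)%:Z *: a j) != 0.
Proof.
move=> v_ge0 l_gt0; rewrite (gb_shiftE l a_indep (toR_add_restricted_sum _ _ bE)).
by apply: shift_prod_neq0 => // j vj0; rewrite /restrict vj0 ltxx.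
Qed.

Lemma gb_neq0_support_sum (w : 'rV[int]_n) : (forall j, 0 <= v j) ->
  gb a l v w != 0 -> exists t : 'I_m -> nat, w = b + \sum_(j < m | 0 < v j) (t j)%:Z *: a j.
Proof.
move=> v_ge0 /gb_neq0_shift[t [t_supp wE]]; exists t; apply: (@toR_inj R).
rewrite wE (toR_add_restricted_sum _ _ bE); apply: eq_bigr => j _.
rewrite /restrict; case: ltP => // vj_le0.
by rewrite t_supp //; apply/le_anti; rewrite vj_le0 v_ge0.
Qed.

Lemma add_support_sum_inj (t t' : 'I_m -> nat) j :
  b + \sum_(j < m | 0 < v j) (t j)%:Z *: a j = b + \sum_(j < m | 0 < v j) (t' j)%:Z *: a j ->
  0 < v j -> t j = t' j.
Proof.
move=> /(congr1 (@toR R n)); rewrite !(toR_add_restricted_sum _ _ bE) => E vj_gt0.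
have := lin_indep_coord_inj a_indep E j.
by rewrite /restrict vj_gt0 => /addrI/eqP; rewrite eqr_nat => /eqP.
Qed.

End SupportShifts.

Theorem corollary4p16 (R : realType) (n m : nat)
  (a0 : 'rV[int]_n) (a : 'I_m -> 'rV[int]_n) (l0 : nat) (l : 'I_m -> nat)
  (b : 'rV[int]_n) (v : 'I_m -> R) (u : 'rV[int]_n) :
  lin_indep R a ->
  (0 < l0)%N -> (forall j, 0 < l j)%N ->
  gcdn l0 (\big[gcdn/0%N]_(j < m) l j) = 1%N ->
  (l0%:Z) *: a0 = \sum_(j < m) (l j)%:Z *: a j ->
  l0 = (\sum_(j < m) l j)%N ->
  (forall j, 0 <= v j < 1) ->
  toR R b = \sum_(j < m) v j *: toR R (a j) ->
  MA R a u ->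
  ZAplus a0 a (u - b) ->
  smallest_face (coneA (R:=R) a) (toR R b) <> coneA (R:=R) a ->
  let sigma := smallest_face (coneA (R:=R) a) (toR R b) in
  let rep (t : 'I_m -> nat) :=
    u = b + \sum_(j < m | toR R (a j) \in sigma) (t j)%:Z *: a j in
  [/\ ((Gcoef a0 a l0 l v u 0 != 0 /\ forall s, (0 < s)%N -> Gcoef a0 a l0 l v u s = 0)
        <-> exists t, rep t),
      (forall t t', rep t -> rep t' -> forall j, toR R (a j) \in sigma -> t j = t' j),
      (forall t, rep t ->
         Gcoef a0 a l0 l v u 0 =
         (\prod_(j < m | toR R (a j) \in sigma) (l j)%:R ^ (- (t j)%:Z)) *
         (\prod_(j < m | toR R (a j) \in sigma) bracket (- v j) (- (t j)%:Z)))
    & (~ (exists t, rep t)) -> forall s, Gcoef a0 a l0 l v u s = 0].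
Proof.
move=> a_indep l0_gt0 l_gt0 _ a0E _ v_range bE [_ u_cone] _ sigma_neq sigma rep.
have v_ge0 j : 0 <= v j by case/andP: (v_range j).
have sigmaE := mem_smallest_face_gen a_indep v_ge0 bE.
have [j0 vj0] := smallest_face_neq_cone v_ge0 bE sigma_neq.
have repE t : rep t <-> u = b + \sum_(j < m | 0 < v j) (t j)%:Z *: a j.
  by rewrite /rep (eq_bigl _ _ sigmaE).
have Gcoef0 : Gcoef a0 a l0 l v u 0 = gb a l v u by apply: Gcoef0E.
have Gcoef_pos s : (0 < s)%N -> Gcoef a0 a l0 l v u s = 0.
  move=> s_gt0; rewrite /Gcoef.
  by rewrite (gb_cone_shift_eq0 (l := l) a_indep l0_gt0 l_gt0 a0E u_cone vj0) ?mul0r.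
have rep_of_Gcoef0 : Gcoef a0 a l0 l v u 0 != 0 -> exists t, rep t.
  by rewrite Gcoef0 => /(gb_neq0_support_sum bE v_ge0)[t uE]; exists t; apply/repE.
split.
- split=> [[/rep_of_Gcoef0 //] | [t /repE uE]].
  by split=> [|s]; [rewrite Gcoef0 uE (gb_add_support_sum_neq0 a_indep bE) | exact: Gcoef_pos].
- move=> t t' /repE uE /repE uE' j; rewrite sigmaE.
  exact: (add_support_sum_inj a_indep bE (etrans (esym uE) uE')).
- move=> t /repE uE; rewrite Gcoef0 uE (gb_add_support_sum l a_indep bE).
  by congr (_ * _); apply: eq_bigl => j; rewrite sigmaE.
- move=> no_rep [|s]; last exact: Gcoef_pos.
  by apply/eqP; apply: contra_notT no_rep => /rep_of_Gcoef0.
Qed.
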